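(* Let $1\le k\le r$ and let $\mathscr{I}=[I_0,\dots,I_{k-1}]$ be an ideal of $\Omega_{H_{k-1}}$. Then (1) $[I_0,\dots,I_{k-1},L(I_{k-1})]$, where $L(I_{k-1})=(\mathrm{res}^k_{k-1})^{-1}(I_{k-1})$, is an ideal of $\Omega_{H_k}$, and it is the largest ideal $[I_0,\dots,I_{k-1},J]$ of $\Omega_{H_k}$ whose restriction to $H_{k-1}$ is $\mathscr I$; (2) $[I_0,\dots,I_{k-1},S(I_{k-1})]$, where $S(I_{k-1})$ is the ideal of $R_k$ generated by $\mathrm{ind}^k_{k-1}(I_{k-1})\cup\mathrm{jnd}^k_{k-1}(I_{k-1})$, is an ideal of $\Omega_{H_k}$, and it is the smallest ideal of $\Omega_{H_k}$ whose restriction to $H_{k-1}$ is $\mathscr I$.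
   Context: Fix a prime $p$ and an integer $r\ge0$. For $0\le k\le r$ let $R_k$ be the commutative ring which is free as a $\mathbb{Z}$-module with basis $X_{k,0},\dots,X_{k,k}$ and multiplication $X_{k,i}X_{k,j}=p^{k-\max(i,j)}X_{k,\min(i,j)}$; thus $X_{k,k}=1$, and an integer $n$ is identified with $nX_{k,k}$. For $0\le k\le\ell\le r$ define: the additive map $\mathrm{ind}^\ell_k:R_k\to R_\ell$, $X_{k,i}\mapsto X_{\ell,i}$; the ring homomorphism $\mathrm{res}^\ell_k:R_\ell\to R_k$, $\mathrm{res}^\ell_k(X_{\ell,i})=p^{\ell-k}X_{k,i}$ if $i\le k$ and $=p^{\ell-i}$ if $i\ge k$; and the multiplicative map $\mathrm{jnd}^\ell_k:R_k\to R_\ell$, $$\mathrm{jnd}^\ell_k\Big(\sum_{i=0}^k m_iX_{k,i}\Big)=m_kX_{\ell,\ell}+\sum_{k\le i<\ell}\frac{m_k^{p^{\ell-i}}-m_k^{p^{\ell-i-1}}}{p^{\ell-i}}X_{\ell,i}+\sum_{0\le i<k}\frac{(\sum_{s=i}^k m_sp^{k-s})^{p^{\ell-k}}-(\sum_{s=i+1}^k m_sp^{k-s})^{p^{\ell-k}}}{p^{\ell-i}}X_{\ell,i}$$ ($m_i\in\mathbb{Z}$). For $k=\ell$ these maps are the identity. These data form the Burnside Tambara functor on $\mathbb{Z}/p^r\mathbb{Z}$, and keeping only indices $\le n$ gives $\Omega_{H_n}$. An ideal of $\Omega_{H_n}$ is a sequence $[I_0,\dots,I_n]$ of ideals $I_k\subseteq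 R_k$ such that for every $1\le k\le n$: $\mathrm{ind}^k_{k-1}(I_{k-1})\subseteq I_k$, $\mathrm{res}^k_{k-1}(I_k)\subseteq I_{k-1}$, $\mathrm{jnd}^k_{k-1}(I_{k-1})\subseteq I_k$. Inclusion is componentwise; the restriction of $[I_0,\dots,I_n]$ to $H_i$ ($i\le n$) is $[I_0,\dots,I_i]$. *)

From HB Require Import structures.
From mathcomp Require Import all_boot all_order all_algebra.
Set Implicit Arguments. Unset Strict Implicit. Unset Printing Implicit Defensive.
Import Order.TTheory GRing.Theory Num.Theory.
Local Open Scope ring_scope.

(* R_k : elements are integer coefficient vectors (m_0,...,m_k) standing for
   sum_i m_i X_{k,i}. *)
Definition Rk (k : nat) := {ffun 'I_k.+1 -> int}.

Definition zeroR (k : nat) : Rk k := [ffun => 0].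
Definition addR (k : nat) (x y : Rk k) : Rk k := [ffun i => x i + y i].
Definition oppR (k : nat) (x : Rk k) : Rk k := [ffun i => - x i].

(* X_{k,i} X_{k,j} = p^(k - max i j) X_{k, min i j}, extended bilinearly. *)
Definition mulR (p k : nat) (x y : Rk k) : Rk k :=
  [ffun m : 'I_k.+1 =>
     \sum_(i < k.+1) \sum_(j < k.+1)
        (if minn i j == m then x i * y j * (p ^ (k - maxn i j))%:Z else 0)].

Definition is_ideal (p k : nat) (J : Rk k -> Prop) : Prop :=
  [/\ J (zeroR k),
      (forall x y, J x -> J y -> J (addR x y)),
      (forall x, J x -> J (oppR x)) &
      (forall r x, J x -> J (mulR p r x))].

Definition indR (k l : nat) (x : Rk k) : Rk l :=
  [ffun i : 'I_l.+1 => if (i <= k)%N then x (inord i) else 0].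

(* res^l_k : X_{l,i} |-> p^(l-k) X_{k,i} (i <= k), p^(l-i) X_{k,k} (i >= k) *)
Definition resR (p k l : nat) (x : Rk l) : Rk k :=
  [ffun j : 'I_k.+1 =>
     if (j < k)%N then (p ^ (l - k))%:Z * x (inord j)
     else \sum_(i < l.+1 | (k <= i)%N) (p ^ (l - i))%:Z * x i].

(* jnd^l_k, with the (exact) integer divisions given by divz *)
Definition jndR (p k l : nat) (x : Rk k) : Rk l :=
  let mk := x ord_max in
  let part (i : nat) := \sum_(s < k.+1 | (i <= s)%N) x s * (p ^ (k - s))%:Z in
  [ffun i : 'I_l.+1 =>
     if (i == l :> nat) then mk
     else if (k <= i)%N then
       divz (mk ^+ (p ^ (l - i)) - mk ^+ (p ^ (l - i - 1))) (p ^ (l - i))%:Z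
     else
       divz (part i ^+ (p ^ (l - k)) - part i.+1 ^+ (p ^ (l - k)))
            (p ^ (l - i))%:Z].

(* An ideal of Omega_{H_n}: a family of ideals I_j of R_j (only j <= n matter) *)
Definition omega_ideal (p n : nat) (I : forall j : nat, Rk j -> Prop) : Prop :=
  (forall j, (j <= n)%N -> is_ideal p (I j)) /\
  (forall k, (0 < k <= n)%N ->
     [/\ (forall x, I k.-1 x -> I k (indR k x)),
         (forall x, I k x -> I k.-1 (resR p k.-1 x)) &
         (forall x, I k.-1 x -> I k (jndR p k x))]).

Definition Lideal (p k : nat) (I : Rk k.-1 -> Prop) : Rk k -> Prop :=
  fun x => I (resR p k.-1 x).

(* S(I) = ideal of R_k generated by ind(I) ∪ jnd(I) (intersection of all
   ideals containing this set) *)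
Definition Sideal (p k : nat) (I : Rk k.-1 -> Prop) : Rk k -> Prop :=
  fun x => forall J : Rk k -> Prop, is_ideal p J ->
    (forall y, I y -> J (indR k y)) -> (forall y, I y -> J (jndR p k y)) -> J x.

From HB Require Import structures.
From mathcomp Require Import all_boot all_order all_algebra finfield ring zify.
Set Implicit Arguments. Unset Strict Implicit. Unset Printing Implicit Defensive.
Import Order.TTheory GRing.Theory Num.Theory.
Local Open Scope ring_scope.

(* For x = sum_s x_s X_{n,s} in R_n and i <= n, the mark
     mark_i(x) = sum_{s >= i} x_s p^(n-s)
   (the number of fixed points of the subgroup of order p^i) defines a ring
   homomorphism R_n -> Z, and the marks jointly determine x when p > 0.
   On marks the structure maps are transparent:
     mark_i(res x) = mark_i(x),  mark_i(ind y) = p * mark_i(y),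
     mark_i(jnd y) = mark_i(y)^p,
   the last one because the divisions in jnd are exact (Fermat's little
   theorem and the lifting  p^e | a - b  ==>  p^(e+1) | a^p - b^p).
   Consequently res is a ring homomorphism, res(ind y) = p y and
   res(jnd y) = y^p.  Hence L(I) = res^{-1}(I) is an ideal containing
   ind(I) and jnd(I), so S(I) is contained in L(I); and any ideal of
   Omega_{H_k} restricting to I has its top component squeezed between
   S(I) and L(I).  A generic extension lemma turns each of S(I), L(I) into
   an ideal of Omega_{H_k}. *)

Lemma fermat_int (p : nat) (m : int) : prime p -> (p %| m ^+ p - m)%Z.
Proof.
move=> pp; rewrite (dvdz_pcharf (pchar_Fp pp)) rmorphB rmorphXn /=.
have := @expf_card _ (m%:~R : 'F_p).
by rewrite card_Fp // => ->; rewrite subrr.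
Qed.

Lemma dvdz_subXX (d a b : int) n : (d %| a - b)%Z -> (d %| a ^+ n - b ^+ n)%Z.
Proof. by move=> h; rewrite subrXX dvdz_mulr. Qed.

Lemma dvdz_lift_pow (p e : nat) (a b : int) : prime p -> (0 < e)%N ->
  ((p ^ e)%:Z %| a - b)%Z -> ((p ^ e.+1)%:Z %| a ^+ p - b ^+ p)%Z.
Proof.
move=> pp e_gt0 dv_ab.
have dvp_ab : (p%:Z %| a - b)%Z.
  by apply: dvdz_trans dv_ab; rewrite dvdzE /= dvdn_exp.
rewrite subrXX expnSr PoszM; apply: dvdz_mul => //.
(* The cofactor sum_{i<p} a^(p-1-i) b^i is congruent to p b^(p-1) mod p. *)
have -> : \sum_(i < p) a ^+ (p.-1 - i) * b ^+ i =
          \sum_(i < p) ((a ^+ (p.-1 - i) - b ^+ (p.-1 - i)) * b ^+ i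
                         + b ^+ p.-1).
  apply: eq_bigr => i _; rewrite mulrBl -exprD subnK ?subrK //.
  by rewrite -ltnS (ltn_predK (ltn_ord i)).
rewrite big_split /= sumr_const card_ord rpredD //.
  by apply: rpred_sum => i _; rewrite dvdz_mulr // dvdz_subXX.
by rewrite -mulr_natr dvdz_mull // dvdzE /= natz.
Qed.

Lemma down_ind (n : nat) (P : nat -> Prop) :
  P n -> (forall i, (i < n)%N -> P i.+1 -> P i) -> forall i, (i <= n)%N -> P i.
Proof.
move=> Pn IH i /subnKC; move: (n - i)%N => d.
elim: d i => [|d IHd] i e; first by rewrite addn0 in e; rewrite e.
apply: IH; first by rewrite -e -addSnnS leq_addr.
by apply: IHd; rewrite addSnnS.
Qed.

(* The mark of x at the subgroup of order p^i. *)
Definition mark (p n i : nat) (x : Rk n) : int :=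
  \sum_(s < n.+1 | (i <= s)%N) x s * (p ^ (n - s))%:Z.
Arguments mark p n i x : clear implicits.

(* The scalar c * X_{n,n} = c * 1 of R_n. *)
Definition scal (n : nat) (c : int) : Rk n :=
  [ffun j : 'I_n.+1 => if j == n :> nat then c else 0].

Section Marks.
Variable p : nat.

Lemma mark_rec n i (x : Rk n) : (i <= n)%N ->
  mark p n i x = x (inord i) * (p ^ (n - i))%:Z + mark p n i.+1 x.
Proof.
move=> le_in; rewrite /mark (bigD1 (inord i)) /= ?inordK //.
congr (_ + _); apply: eq_bigl => s.
rewrite -val_eqE /= inordK // ltn_neqAle andbC eq_sym.
by case: (i <= s)%N; rewrite ?andbF ?andbT.
Qed.

Lemma mark_end n (x : Rk n) : mark p n n.+1 x = 0.
Proof. by rewrite /mark big1 // => s; rewrite leqNgt ltn_ord. Qed.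

(* The marks separate the points of R_n: peel off x_i = y_i from mark_i,
   which requires p^(n-i) to be non-zero. *)
Lemma mark_inj n (x y : Rk n) : (0 < p)%N ->
  (forall i, (i <= n)%N -> mark p n i x = mark p n i y) -> x = y.
Proof.
move=> p_gt0 eq_mark; apply/ffunP => j; have le_jn : (j <= n)%N := ltn_ord j.
have eq_next : mark p n j.+1 x = mark p n j.+1 y.
  have [lt_jn|ge_jn] := ltnP j n; first exact: eq_mark.
  have -> : j.+1 = n.+1 by lia.
  by rewrite !mark_end.
move: (eq_mark j le_jn).
rewrite (mark_rec x le_jn) (mark_rec y le_jn) eq_next inord_val.
by move=> /addIr/mulIf; apply; rewrite eqz_nat -lt0n expn_gt0 p_gt0.
Qed.

Lemma mark_zero n i : mark p n i (zeroR n) = 0.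
Proof. by rewrite /mark big1 // => s _; rewrite ffunE mul0r. Qed.

Lemma mark_add n i (x y : Rk n) :
  mark p n i (addR x y) = mark p n i x + mark p n i y.
Proof. by rewrite /mark -big_split; apply: eq_bigr => s _; rewrite ffunE mulrDl. Qed.

Lemma mark_opp n i (x : Rk n) : mark p n i (oppR x) = - mark p n i x.
Proof. by rewrite /mark -sumrN; apply: eq_bigr => s _; rewrite ffunE mulNr. Qed.

(* The mark of a product of basis elements:
   p^(n - max a b) X_{min a b} has mark p^(n-a) p^(n-b) when i <= a, b. *)
Lemma mark_basis_mul n i (a b : 'I_n.+1) (c : int) :
  \sum_(s < n.+1 | (i <= s)%N)
     (if minn a b == s then c * (p ^ (n - maxn a b))%:Z else 0)
       * (p ^ (n - s))%:Z =
  if (i <= a)%N && (i <= b)%N then c * (p ^ (n - a))%:Z * (p ^ (n - b))%:Z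
  else 0.
Proof.
have lt_min : (minn a b < n.+1)%N by rewrite gtn_min ltn_ord.
rewrite big_mkcond /= (bigD1 (Ordinal lt_min)) //= big1; last first.
  move=> s ne_s; case: ifP => // _; case: eqP => [e|]; last by rewrite mul0r.
  by move: ne_s; rewrite -val_eqE /= e eqxx.
rewrite addr0 eqxx leq_min; case: ifP => // _.
rewrite -mulrA -PoszM -expnD.
have -> : ((n - maxn a b) + (n - minn a b) = (n - a) + (n - b))%N.
  by have := ltn_ord a; have := ltn_ord b; lia.
by rewrite expnD PoszM mulrA.
Qed.

Lemma mark_mul n i (x y : Rk n) :
  mark p n i (mulR p x y) = mark p n i x * mark p n i y.
Proof.
rewrite /mark big_distrlr /=.
have expand s : (mulR p x y) s * (p ^ (n - s))%:Z =
  \sum_(a < n.+1) \sum_(b < n.+1)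
    (if minn a b == s then x a * y b * (p ^ (n - maxn a b))%:Z else 0)
      * (p ^ (n - s))%:Z.
  by rewrite ffunE mulr_suml; apply: eq_bigr => a _; rewrite mulr_suml.
rewrite (eq_bigr _ (fun s _ => expand s)) exchange_big [RHS]big_mkcond /=; apply: eq_bigr => a _.
rewrite exchange_big /=.
have -> : (if (i <= a)%N then \sum_(b < n.+1 | (i <= b)%N)
     x a * (p ^ (n - a))%:Z * (y b * (p ^ (n - b))%:Z) else 0) =
  \sum_(b < n.+1) (if (i <= a)%N && (i <= b)%N then
     x a * y b * (p ^ (n - a))%:Z * (p ^ (n - b))%:Z else 0).
  case: (i <= a)%N; last by rewrite big1.
  by rewrite big_mkcond; apply: eq_bigr => b _; case: ifP => //= _; ring.
by apply: eq_bigr => b _; rewrite mark_basis_mul.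
Qed.

Lemma mark_scal n i c : (i <= n)%N -> mark p n i (scal n c) = c.
Proof.
move: i; apply: down_ind => [|j lt_jn IH].
  by rewrite mark_rec // mark_end ffunE inordK // eqxx subnn expn0 mulr1 addr0.
rewrite mark_rec ?(ltnW lt_jn) // IH ffunE inordK ?ltnS ?(ltnW lt_jn) //.
by rewrite (ltn_eqF lt_jn) mul0r add0r.
Qed.

Lemma mark_res n i (x : Rk n.+1) : (i <= n)%N ->
  mark p n i (resR p n x) = mark p n.+1 i x.
Proof.
move: i; apply: down_ind => [|j lt_jn IH].
  rewrite mark_rec // mark_end addr0 ffunE inordK // ltnn subnn expn0 mulr1.
  by rewrite /mark; apply: eq_bigr => t _; rewrite mulrC.
rewrite mark_rec ?(ltnW lt_jn) // IH [RHS]mark_rec; last by lia.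
rewrite ffunE inordK ?ltnS ?(ltnW lt_jn) // lt_jn.
by congr (_ + _); rewrite subSnn expn1 (subSn (ltnW lt_jn)) expnS PoszM; ring.
Qed.

Lemma mark_ind n i (y : Rk n) : (i <= n)%N ->
  mark p n.+1 i (indR n.+1 y) = p%:Z * mark p n i y.
Proof.
move: i; apply: down_ind => [|j lt_jn IH].
  rewrite mark_rec // mark_rec // !mark_end mark_rec // mark_end.
  rewrite !ffunE !inordK // leqnn ltnn !subnn subSnn expn0 expn1 mul0r; ring.
rewrite (mark_rec (n := n.+1) (i := j)) ?IH; last by lia.
rewrite (mark_rec (i := j) y) ?(ltnW lt_jn) // ffunE inordK; last by lia.
rewrite (ltnW lt_jn) mulrDr subSn ?(ltnW lt_jn) // expnS PoszM.
congr (_ + _); ring.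
Qed.

Hypothesis p_prime : prime p.

(* Multiplicative induction raises the marks to the p-th power; this is
   where the exactness of the divisions in jnd is used. *)
Lemma mark_jnd n i (y : Rk n) : (i <= n)%N ->
  mark p n.+1 i (jndR p n.+1 y) = mark p n i y ^+ p.
Proof.
move: i; apply: down_ind => [|j lt_jn IH].
  rewrite mark_rec // mark_rec // mark_end (mark_rec y) // mark_end.
  rewrite !ffunE /= !inordK // eqxx (ltn_eqF (ltnSn n)) leqnn.
  rewrite subSnn !subnn expn1 expn0 expr1 !mulr1 !addr0.
  have -> : (inord n : 'I_n.+1) = ord_max by apply: val_inj; rewrite /= inordK.
  by rewrite divzK ?fermat_int // subrK.
rewrite (mark_rec (n := n.+1) (i := j)) ?IH; last by lia.
rewrite ffunE /= inordK; last by lia.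
rewrite (_ : (j == n.+1) = false); last by lia.
rewrite leqNgt lt_jn /= -!/(mark p n _ y) subSnn expn1 divzK ?subrK //.
rewrite (subSn (ltnW lt_jn)); apply: dvdz_lift_pow => //; first by rewrite subn_gt0.
by rewrite (mark_rec y) ?(ltnW lt_jn) // addrK dvdz_mull // dvdzz.
Qed.

End Marks.

Section StructureMaps.
Variable p : nat.
Hypothesis p_gt0 : (0 < p)%N.

Lemma res_zero n : resR p n (zeroR n.+1) = zeroR n.
Proof. by apply: (mark_inj (p := p)) => // i le_in; rewrite mark_res // !mark_zero. Qed.

Lemma res_add n (x y : Rk n.+1) :
  resR p n (addR x y) = addR (resR p n x) (resR p n y).
Proof. by apply: (mark_inj (p := p)) => // i le_in; rewrite mark_res // !mark_add !mark_res. Qed.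

Lemma res_opp n (x : Rk n.+1) : resR p n (oppR x) = oppR (resR p n x).
Proof. by apply: (mark_inj (p := p)) => // i le_in; rewrite mark_res // !mark_opp !mark_res. Qed.

Lemma res_mul n (x y : Rk n.+1) :
  resR p n (mulR p x y) = mulR p (resR p n x) (resR p n y).
Proof. by apply: (mark_inj (p := p)) => // i le_in; rewrite mark_res // !mark_mul !mark_res. Qed.

Lemma res_ind n (y : Rk n) : resR p n (indR n.+1 y) = mulR p (scal n p%:Z) y.
Proof.
by apply: (mark_inj (p := p)) => // i le_in; rewrite mark_res // mark_mul mark_scal // mark_ind.
Qed.

Definition powR n (y : Rk n) (e : nat) : Rk n :=
  iter e (fun z => mulR p z y) (scal n 1).

Lemma mark_pow n (y : Rk n) e i : (i <= n)%N ->
  mark p n i (powR y e) = mark p n i y ^+ e.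
Proof.
move=> le_in; elim: e => [|e IH]; first by rewrite /powR /= mark_scal.
by rewrite /powR iterS mark_mul -/(powR y e) IH exprSr.
Qed.

(* res(jnd y) = y^p, written as y^(p-1) * y to exhibit a multiple of y. *)
Lemma res_jnd n (y : Rk n) : prime p ->
  resR p n (jndR p n.+1 y) = mulR p (powR y p.-1) y.
Proof.
move=> pp; apply: (mark_inj (p := p)) => // i le_in.
by rewrite mark_res // mark_jnd // mark_mul mark_pow // -exprSr prednK.
Qed.

End StructureMaps.

Lemma ideal_ext p n (J K : Rk n -> Prop) :
  is_ideal p J -> (forall x, K x <-> J x) -> is_ideal p K.
Proof.
move=> [J0 JD JN JM] eqKJ; split.
- exact/eqKJ.
- by move=> x y /eqKJ Jx /eqKJ Jy; apply/eqKJ/JD.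
- by move=> x /eqKJ Jx; apply/eqKJ/JN.
- by move=> r x /eqKJ Jx; apply/eqKJ/JM.
Qed.

(* L(J) is an ideal, as preimage of an ideal under a ring homomorphism. *)
Lemma Lideal_ideal p n (J : Rk n -> Prop) : (0 < p)%N -> is_ideal p J ->
  is_ideal p (@Lideal p n.+1 J).
Proof.
move=> p_gt0 [J0 JD JN JM]; rewrite /Lideal /=; split.
- by rewrite res_zero.
- by move=> x y Jx Jy; rewrite res_add //; apply: JD.
- by move=> x Jx; rewrite res_opp //; apply: JN.
- by move=> r x Jx; rewrite res_mul //; apply: JM.
Qed.

(* L(J) contains ind(J) and jnd(J): their restrictions are multiples of
   elements of J. *)
Lemma Lideal_ind p n (J : Rk n -> Prop) : (0 < p)%N -> is_ideal p J ->
  forall y, J y -> @Lideal p n.+1 J (indR n.+1 y).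
Proof. by move=> p_gt0 [_ _ _ JM] y Jy; rewrite /Lideal /= res_ind //; apply: JM. Qed.

Lemma Lideal_jnd p n (J : Rk n -> Prop) : prime p -> is_ideal p J ->
  forall y, J y -> @Lideal p n.+1 J (jndR p n.+1 y).
Proof.
by move=> pp [_ _ _ JM] y Jy; rewrite /Lideal /= res_jnd ?prime_gt0 //; apply: JM.
Qed.

Lemma Sideal_ideal p k (J : Rk k.-1 -> Prop) : is_ideal p (@Sideal p k J).
Proof.
split.
- by move=> T [].
- move=> x y Sx Sy T T_ideal Tind Tjnd; case: (T_ideal) => _ TD _ _.
  by apply: TD; [apply: Sx | apply: Sy].
- move=> x Sx T T_ideal Tind Tjnd; case: (T_ideal) => _ _ TN _.
  by apply: TN; apply: Sx.
- move=> r x Sx T T_ideal Tind Tjnd; case: (T_ideal) => _ _ _ TM.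
  by apply: TM; apply: Sx.
Qed.

Lemma Sideal_ind p k (J : Rk k.-1 -> Prop) y : J y -> @Sideal p k J (indR k y).
Proof. by move=> Jy T _ Tind _; apply: Tind. Qed.

Lemma Sideal_jnd p k (J : Rk k.-1 -> Prop) y : J y -> @Sideal p k J (jndR p k y).
Proof. by move=> Jy T _ _ Tjnd; apply: Tjnd. Qed.

Lemma Sideal_least p k (J : Rk k.-1 -> Prop) (T : Rk k -> Prop) :
  is_ideal p T -> (forall y, J y -> T (indR k y)) ->
  (forall y, J y -> T (jndR p k y)) -> forall x, @Sideal p k J x -> T x.
Proof. by move=> T_ideal Tind Tjnd x Sx; apply: Sx. Qed.

Lemma omega_ideal_extend p n (I K : forall j : nat, Rk j -> Prop)
    (T : Rk n.+1 -> Prop) :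
  omega_ideal p n I -> is_ideal p T ->
  (forall y, I n y -> T (indR n.+1 y)) ->
  (forall x, T x -> I n (resR p n x)) ->
  (forall y, I n y -> T (jndR p n.+1 y)) ->
  (forall j, (j < n.+1)%N -> forall x, K j x <-> I j x) ->
  (forall x, K n.+1 x <-> T x) ->
  omega_ideal p n.+1 K.
Proof.
move=> [I_ideal I_maps] T_ideal Tind Tres Tjnd eqKI eqKT; split.
  move=> j; rewrite leq_eqVlt => /orP [/eqP -> | lt_jn].
    exact: ideal_ext T_ideal eqKT.
  exact: ideal_ext (I_ideal j lt_jn) (eqKI j lt_jn).
have eqKn := eqKI n (ltnSn n).
move=> j /andP [j_gt0]; rewrite leq_eqVlt => /orP [/eqP -> /= | lt_jn].
  split=> x.
  - by move=> /eqKn Ix; apply/eqKT/Tind.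
  - by move=> /eqKT Tx; apply/eqKn/Tres.
  - by move=> /eqKn Ix; apply/eqKT/Tjnd.
have lt_j1n : (j.-1 < n.+1)%N by lia.
have [Iind Ires Ijnd] := I_maps j (introT andP (conj j_gt0 lt_jn)).
split=> x.
- by move=> /(eqKI _ lt_j1n) Ix; apply/(eqKI _ lt_jn)/Iind.
- by move=> /(eqKI _ lt_jn) Ix; apply/(eqKI _ lt_j1n)/Ires.
- by move=> /(eqKI _ lt_j1n) Ix; apply/(eqKI _ lt_jn)/Ijnd.
Qed.

Theorem proposition3 (p r k : nat) (I : forall j : nat, Rk j -> Prop) :
  prime p -> (1 <= k <= r)%N -> omega_ideal p k.-1 I ->
  (* (1) *)
  ((forall K : forall j : nat, Rk j -> Prop,
      (forall j, (j < k)%N -> forall x, K j x <-> I j x) ->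
      (forall x, K k x <-> Lideal p (I k.-1) x) ->
      omega_ideal p k K) /\
   (forall K : forall j : nat, Rk j -> Prop,
      omega_ideal p k K ->
      (forall j, (j < k)%N -> forall x, K j x <-> I j x) ->
      forall x, K k x -> Lideal p (I k.-1) x)) /\
  (* (2) *)
  ((forall K : forall j : nat, Rk j -> Prop,
      (forall j, (j < k)%N -> forall x, K j x <-> I j x) ->
      (forall x, K k x <-> Sideal p (I k.-1) x) ->
      omega_ideal p k K) /\
   (forall K : forall j : nat, Rk j -> Prop,
      omega_ideal p k K ->
      (forall j, (j < k)%N -> forall x, K j x <-> I j x) ->
      forall x, Sideal p (I k.-1) x -> K k x)).
Proof.
move=> pp; case: k => [//|n] _ hI /=.
have p_gt0 := prime_gt0 pp.
have In_ideal : is_ideal p (I n) by case: hI => I_ideal _; apply: I_ideal.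
have L_ideal := Lideal_ideal p_gt0 In_ideal.
have Lind := Lideal_ind p_gt0 In_ideal.
have Ljnd := Lideal_jnd pp In_ideal.
have top_maps K : omega_ideal p n.+1 K ->
    (forall j, (j < n.+1)%N -> forall x, K j x <-> I j x) ->
    [/\ forall y, I n y -> K n.+1 (indR n.+1 y),
        forall x, K n.+1 x -> I n (resR p n x) &
        forall y, I n y -> K n.+1 (jndR p n.+1 y)].
  move=> [_ K_maps] eqKI; have [Kind Kres Kjnd] := K_maps n.+1 (leqnn _).
  have eqKn := eqKI n (ltnSn n).
  by split=> x; [move/eqKn/Kind | move/Kres/eqKn | move/eqKn/Kjnd].
split; split.
- move=> K eqKI eqKL.
  exact: omega_ideal_extend hI L_ideal Lind _ Ljnd eqKI eqKL.
- by move=> K hK eqKI; have [_ Kres _] := top_maps K hK eqKI.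
- move=> K eqKI eqKS.
  apply: omega_ideal_extend hI (Sideal_ideal _ _) _ _ _ eqKI eqKS.
  + exact: Sideal_ind.
  + by move=> x /(Sideal_least L_ideal Lind Ljnd).
  + exact: Sideal_jnd.
- move=> K hK eqKI; have [Kind _ Kjnd] := top_maps K hK eqKI.
  by apply: (Sideal_least (k := n.+1)) Kind Kjnd; case: hK => K_ideal _; apply: K_ideal.
Qed.
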